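(* Let $D$ be a directed graph (quiver) with vertex set $I$, $A=kD$ its path algebra, and let $r$ be any of $r_b,r_k,r_l,r_j$. Let $s,t\in I$ with $A_{st}\neq 0$. Then (i) $r(A_{st})=0$ if and only if $A_{ts}\neq 0$; (ii) $r(A_{st})=A_{st}$ if and only if $A_{ts}=0$.
   Context: $D$ may be infinite and may have multiple arrows and loops; $k$ is a field. The path algebra $A=kD=\bigoplus_{i,j\in I}A_{ij}$, where $A_{ij}$ is the $k$-span of all paths from $i$ to $j$ of length $\ge1$, together with the trivial path $e_{ii}$ when $i=j$; multiplication is concatenation (a path from $i$ to $j$ times a path from $j$ to $l$ is the concatenated path from $i$ to $l$, other products zero, $e_{ii}$ acting as identity on paths starting/ending at $i$). Thus $A_{ij}\neq 0$ iff there is a path from $i$ to $j$. $A$ is a generalized matrix algebra, and $A_{st}$ is regarded as a $\Gamma$-ring with $\Gamma=A_{ts}$ (ternary product via path multiplication); $r(A_{st})$ is its radical as a $\Gamma$-ring: $r_b$ Baer (prime) radical, $r_k$ nil radical, $r_l$ Levitzki radical, $r_j$ Jacobson radical (in the sense of Coppage–Luh), where e.g. $y\in A_{st}$ is right quasi-regular if for each $x\in A_{ts}$ there is $u\in A_{ts}A_{st}$ with $yxu+yx+u$... (standard Coppage–Luh definition). *)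

From mathcomp Require Import all_boot all_algebra.
From Stdlib Require List.
Set Implicit Arguments. Unset Strict Implicit. Unset Printing Implicit Defensive.
Import GRing.Theory.
Local Open Scope ring_scope.

(* ---------- Path algebra kD of a quiver D = (I, Q1, src, tgt) ----------
   A path is recorded by its list of arrows (read left to right); a vector of
   kD restricted to A_{ij} is a finitely supported function from arrow lists
   to k, supported on lists that form a path from i to j (the empty list
   being the trivial path e_ii, allowed only when i = j). *)

Definition vec (k : fieldType) (Q1 : Type) := seq Q1 -> k.

Fixpoint walk (I Q1 : Type) (src tgt : Q1 -> I) (i j : I) (l : seq Q1) : Prop :=
  match l with
  | [::] => i = j
  | a :: l' => src a = i /\ walk src tgt (tgt a) j l'
  end.

Section Vec.
Variables (k : fieldType) (Q1 : Type).
Local Notation V := (vec k Q1).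

Definition vzero : V := fun _ => 0.
Definition vadd (f g : V) : V := fun l => f l + g l.
Definition vopp (f : V) : V := fun l => - f l.
Definition veq (f g : V) : Prop := forall l, f l = g l.
Definition vmul (f g : V) : V :=
  fun l => \sum_(n < (size l).+1) f (take n l) * g (drop n l).
Definition finsupp (f : V) : Prop :=
  exists S : seq (seq Q1), forall l, f l != 0 -> List.In l S.
End Vec.

Definition inA (k : fieldType) (I Q1 : Type) (src tgt : Q1 -> I) (i j : I)
  (f : vec k Q1) : Prop :=
  finsupp f /\ forall l, f l != 0 -> walk src tgt i j l.

Definition Anz (k : fieldType) (I Q1 : Type) (src tgt : Q1 -> I) (i j : I) : Prop :=
  exists f : vec k Q1, inA src tgt i j f /\ ~ veq f (@vzero k Q1).

Section GammaRing.
Variables (k : fieldType) (Q1 : Type).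
Local Notation V := (vec k Q1).
Variables (M G : V -> Prop).

Definition tp (a g b : V) : V := vmul (vmul a g) b.

Definition subgroup (J : V -> Prop) : Prop :=
  (forall x, J x -> M x) /\ J (@vzero k Q1) /\
  (forall x y, J x -> J y -> J (vadd x (vopp y))).

Definition ideal (J : V -> Prop) : Prop :=
  subgroup J /\
  (forall a g m, J a -> G g -> M m -> J (tp a g m) /\ J (tp m g a)).

Definition right_ideal (J : V -> Prop) : Prop :=
  subgroup J /\ (forall a g m, J a -> G g -> M m -> J (tp a g m)).

Definition prime_ideal (P : V -> Prop) : Prop :=
  ideal P /\ (exists m, M m /\ ~ P m) /\
  forall A B, ideal A -> ideal B ->
    (forall a g b, A a -> G g -> B b -> P (tp a g b)) ->
    (forall a, A a -> P a) \/ (forall b, B b -> P b).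

Definition nilpotent_elt (x : V) : Prop :=
  forall g, G g -> exists n, veq (iter n (fun y => tp x g y) x) (@vzero k Q1).

Definition nil_ideal (J : V -> Prop) : Prop :=
  ideal J /\ forall x, J x -> nilpotent_elt x.

Fixpoint prodset (F D : seq V) (n : nat) (z : V) : Prop :=
  match n with
  | O => List.In z F
  | S n' => exists x d w, List.In x F /\ List.In d D /\ prodset F D n' w /\
                          z = tp x d w
  end.

Definition loc_nilpotent (Sb : V -> Prop) : Prop :=
  forall F D : seq V, (forall f, List.In f F -> Sb f) ->
    (forall d, List.In d D -> G d) ->
    exists n, (0 < n)%N /\ forall z, prodset F D n z -> veq z (@vzero k Q1).

Definition lnil_ideal (J : V -> Prop) : Prop := ideal J /\ loc_nilpotent J.

Definition in_GM (u : V) : Prop :=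
  exists ps : seq (V * V), (forall p, List.In p ps -> G p.1 /\ M p.2) /\
    veq u (fun l => \sum_(p <- ps) vmul p.1 p.2 l).

Definition rqr (y : V) : Prop :=
  forall x, G x -> exists u, in_GM u /\
    veq (vadd (vadd (vmul (vmul x y) u) (vmul x y)) u) (@vzero k Q1).

Definition rqr_right_ideal (J : V -> Prop) : Prop :=
  right_ideal J /\ forall y, J y -> rqr y.

Definition family_sum (Fam : (V -> Prop) -> Prop) (x : V) : Prop :=
  exists xs : seq V, (forall y, List.In y xs -> exists J, Fam J /\ J y) /\
    veq x (fun l => \sum_(y <- xs) y l).

Definition rad_baer (x : V) : Prop := M x /\ forall P, prime_ideal P -> P x.
Definition rad_nil : V -> Prop := family_sum nil_ideal.
Definition rad_lev : V -> Prop := family_sum lnil_ideal.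
Definition rad_jac : V -> Prop := family_sum rqr_right_ideal.
End GammaRing.

Inductive radkind := Rb | Rk | Rl | Rj.

Definition radical (k : fieldType) (Q1 : Type) (r : radkind)
  (M G : vec k Q1 -> Prop) : vec k Q1 -> Prop :=
  match r with
  | Rb => rad_baer M G
  | Rk => rad_nil M G
  | Rl => rad_lev M G
  | Rj => rad_jac M G
  end.

(* In the path algebra kD, the coefficient of a product at the concatenation
   of two longest paths is the product of the two leading coefficients, so a
   product of nonzero elements is nonzero.  Hence when A_ts <> 0 no nonzero
   element of A_st is nilpotent or quasi-regular, and {0} is a prime ideal:
   every radical of A_st vanishes.  When A_ts = 0 the Gamma-ring A_st has
   trivial Gamma, so A_st itself is a nil, locally nilpotent and quasi-regular
   ideal, and it has no prime ideal: every radical is all of A_st. *)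

From mathcomp Require Import all_boot all_algebra.
From Stdlib Require Import Classical FunctionalExtensionality.
Set Implicit Arguments. Unset Strict Implicit. Unset Printing Implicit Defensive.
Import GRing.Theory.
Local Open Scope ring_scope.

Section PathVectors.
Variables (k : fieldType) (Q1 : Type).
Local Notation V := (vec k Q1).
Local Notation Z := (@vzero k Q1).

Definition vscale (c : k) (f : V) : V := fun l => c * f l.

Lemma veqP (f g : V) : veq f g <-> f = g.
Proof. by split=> [H|->]; [apply: functional_extensionality | ]. Qed.

Lemma vmul0l (g : V) : vmul Z g = Z.
Proof. by apply/veqP => l; rewrite /vmul big1 // => i _; rewrite mul0r. Qed.

Lemma vmul0r (f : V) : vmul f Z = Z.
Proof. by apply/veqP => l; rewrite /vmul big1 // => i _; rewrite mulr0. Qed.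

Lemma tp_gamma0 (a b : V) : tp a Z b = Z.
Proof. by rewrite /tp vmul0r vmul0l. Qed.

Lemma vmul_nil (f g : V) : vmul f g [::] = f [::] * g [::].
Proof. by rewrite /vmul big_ord_recl big_ord0 addr0. Qed.

Lemma vmul_supp (f g : V) l : vmul f g l != 0 ->
  exists l1 l2, [/\ l = l1 ++ l2, f l1 != 0 & g l2 != 0].
Proof.
move=> Hl; apply: NNPP => Hno; move/eqP: Hl; apply.
rewrite /vmul big1 // => n _; apply/eqP; apply: contraT.
rewrite mulf_eq0 negb_or => /andP[Hf Hg]; case: Hno.
by exists (take n l), (drop n l); rewrite cat_take_drop.
Qed.

Definition bounded (f : V) := exists N, forall l, f l != 0 -> (size l <= N)%N.

Lemma finsupp_bounded (f : V) : finsupp f -> bounded f.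
Proof.
case=> S HS; exists (\max_(l <- S) size l) => l /HS.
elim: S {HS} => [|l' S IH] //= [<-|/IH Hl]; rewrite big_cons.
  exact: leq_maxl.
exact: leq_trans Hl (leq_maxr _ _).
Qed.

Lemma bounded0 : bounded Z.
Proof. by exists 0%N => l; rewrite eqxx. Qed.

Lemma bounded_vadd (f g : V) : bounded f -> bounded g -> bounded (vadd f g).
Proof.
move=> [N1 H1] [N2 H2]; exists (maxn N1 N2) => l; rewrite /vadd.
have [->|/H1 Hf _] := eqVneq (f l) 0; last exact: leq_trans Hf (leq_maxl _ _).
by rewrite add0r => /H2 Hg; exact: leq_trans Hg (leq_maxr _ _).
Qed.

Lemma bounded_vmul (f g : V) : bounded f -> bounded g -> bounded (vmul f g).
Proof.
move=> [N1 H1] [N2 H2]; exists (N1 + N2)%N => l.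
by case/vmul_supp => l1 [l2 [-> /H1 Hf /H2 Hg]]; rewrite size_cat leq_add.
Qed.

Lemma sum_closed (P : V -> Prop) (xs : seq V) :
  P Z -> (forall f g, P f -> P g -> P (vadd f g)) ->
  (forall y, List.In y xs -> P y) -> P (fun l => \sum_(y <- xs) y l).
Proof.
move=> P0 PD; elim: xs => [|x xs IH] Hxs.
  by have -> : (fun l => \sum_(y <- [::]) y l) = Z
    by apply/veqP => l; rewrite big_nil.
have -> : (fun l => \sum_(y <- x :: xs) y l) =
          vadd x (fun l => \sum_(y <- xs) y l)
  by apply/veqP => l; rewrite big_cons.
by apply: PD; [apply: Hxs; left | apply: IH => y Hy; apply: Hxs; right].
Qed.

Lemma family_sum_closed (P : V -> Prop) (Fam : (V -> Prop) -> Prop) x :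
  P Z -> (forall f g, P f -> P g -> P (vadd f g)) ->
  (forall J y, Fam J -> J y -> P y) -> family_sum Fam x -> P x.
Proof.
move=> P0 PD PFam [xs [Hxs /veqP ->]]; apply: sum_closed => // y /Hxs[J [HJ Hy]].
exact: PFam HJ Hy.
Qed.

Lemma family_sum0 (Fam : (V -> Prop) -> Prop) : family_sum Fam Z.
Proof. by exists [::]; split => // l; rewrite big_nil. Qed.

Lemma family_sum_member (Fam : (V -> Prop) -> Prop) (J : V -> Prop) x :
  Fam J -> J x -> family_sum Fam x.
Proof.
move=> HJ Hx; exists [:: x]; split; first by move=> y [<-|[]]; exists J.
by move=> l; rewrite big_seq1.
Qed.

Definition lead_word (f : V) L :=
  f L != 0 /\ forall l, f l != 0 -> (size l <= size L)%N.

Lemma lead_word_neq0 (f : V) L : lead_word f L -> f <> Z.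
Proof. by case=> HL _ Ef; rewrite Ef eqxx in HL. Qed.

Lemma lead_wordP (f : V) : bounded f -> f <> Z -> exists L, lead_word f L.
Proof.
move=> [N HN] Hf.
have [l0 Hl0] : exists l, f l != 0.
  apply: NNPP => Hno; apply: Hf; apply/veqP => l.
  by apply/eqP; apply: contraT => Hl; case: Hno; exists l.
elim: N HN => [|N IH] HN; first by exists l0; split=> // l /HN /leq_trans->.
case: (classic (exists l, f l != 0 /\ size l = N.+1)) => [[L [HL Hs]]|Hno].
  by exists L; split=> // l; rewrite Hs; exact: HN.
apply: IH => l Hl; rewrite -ltnS ltn_neqAle HN // andbT.
by apply/eqP => Hs; case: Hno; exists l.
Qed.

Lemma lead_word_out (f : V) L l :
  lead_word f L -> (size L < size l)%N -> f l = 0.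
Proof.
by case=> _ H Hs; apply/eqP; apply: contraTT Hs => /H; rewrite -leqNgt.
Qed.

Lemma vmul_lead_coef (f g : V) L1 L2 : lead_word f L1 -> lead_word g L2 ->
  vmul f g (L1 ++ L2) = f L1 * g L2.
Proof.
move=> [_ Hf] [_ Hg].
have Hlt : (size L1 < (size (L1 ++ L2)).+1)%N by rewrite size_cat ltnS leq_addr.
rewrite /vmul (bigD1 (Ordinal Hlt)) //= take_size_cat // drop_size_cat //.
rewrite big1 ?addr0 // => n Hn; apply/eqP; apply: contraT.
rewrite mulf_eq0 negb_or => /andP[/Hf H1 /Hg H2]; case/negP: Hn.
suff Hn : nat_of_ord n = size L1 by apply/eqP/val_inj.
have Hle : (n <= size (L1 ++ L2))%N by rewrite -ltnS.
move: H1 H2 Hle; rewrite size_drop; move: (nat_of_ord n) => m H1 H2 Hle.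
rewrite size_takel // in H1.
rewrite size_cat leq_subLR leq_add2r in H2.
by apply/eqP; rewrite eqn_leq H1 H2.
Qed.

Lemma lead_word_vmul (f g : V) L1 L2 : lead_word f L1 -> lead_word g L2 ->
  lead_word (vmul f g) (L1 ++ L2).
Proof.
move=> Hf Hg; split.
  by rewrite (vmul_lead_coef Hf Hg) mulf_neq0 ?Hf.1 ?Hg.1.
move=> l /vmul_supp[l1 [l2 [-> /Hf.2 H1 /Hg.2 H2]]].
by rewrite !size_cat leq_add.
Qed.

Lemma lead_word_tp (a g b : V) La Lg Lb :
  lead_word a La -> lead_word g Lg -> lead_word b Lb ->
  lead_word (tp a g b) ((La ++ Lg) ++ Lb).
Proof. by move=> Ha Hg Hb; apply: lead_word_vmul (lead_word_vmul Ha Hg) Hb. Qed.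

Lemma iter_tp_neq0 (y g : V) n : bounded y -> bounded g -> y <> Z -> g <> Z ->
  iter n (fun z => tp y g z) y <> Z.
Proof.
move=> By Bg /(lead_wordP By)[Ly HLy] /(lead_wordP Bg)[Lg HLg].
suff [L /lead_word_neq0//] :
  exists L, lead_word (iter n (fun z => tp y g z) y) L.
elim: n => [|n [L HL]]; first by exists Ly.
by exists ((Ly ++ Lg) ++ L); exact: lead_word_tp.
Qed.

Lemma tp_neq0 (a g b : V) : bounded a -> bounded g -> bounded b ->
  a <> Z -> g <> Z -> b <> Z -> tp a g b <> Z.
Proof.
move=> Ba Bg Bb /(lead_wordP Ba)[La HLa] /(lead_wordP Bg)[Lg HLg].
move=> /(lead_wordP Bb)[Lb HLb].
exact: lead_word_neq0 (lead_word_tp HLa HLg HLb).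
Qed.

Lemma quasi_inverse_const_coef (w u : V) :
  vadd (vadd (vmul w u) w) u = Z -> w [::] <> -1.
Proof.
move=> /veqP /(_ [::]) + Hw; rewrite /vadd vmul_nil Hw mulN1r addrAC addNr add0r.
by move/eqP; rewrite oppr_eq0 oner_eq0.
Qed.

(* With no constant term, w cannot cancel against its quasi-inverse u: the
   coefficient of vmul w u at the concatenated leading words is not hit by w
   or u, because both leading words are nonempty. *)
Lemma quasi_inverse_eq0 (w u : V) : bounded w -> bounded u -> w [::] = 0 ->
  vadd (vadd (vmul w u) w) u = Z -> w = Z.
Proof.
move=> Bw Bu Hw0 Hqr; apply: NNPP => /(lead_wordP Bw)[Lw HLw].
have Lw_pos : (0 < size Lw)%N.
  by case: Lw HLw => [[]|//]; rewrite Hw0 eqxx.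
have Hcoef l : vmul w u l + w l + u l = 0 by move/veqP: Hqr => /(_ l).
have [Eu|/(lead_wordP Bu)[Lu HLu]] := classic (u = Z).
  move: (Hcoef Lw) HLw.1; rewrite Eu vmul0r /vzero add0r addr0 => ->.
  by rewrite eqxx.
have Lu_pos : (0 < size Lu)%N.
  case: Lu HLu => [[]|//]; move: (Hcoef [::]).
  by rewrite vmul_nil Hw0 mul0r !add0r => ->; rewrite eqxx.
have Hw_out : (size Lw < size (Lw ++ Lu))%N.
  by rewrite size_cat -{1}[size Lw]addn0 ltn_add2l.
have Hu_out : (size Lu < size (Lw ++ Lu))%N.
  by rewrite size_cat -{1}[size Lu]add0n ltn_add2r.
move: (Hcoef (Lw ++ Lu)).
rewrite (vmul_lead_coef HLw HLu) (lead_word_out HLw Hw_out).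
rewrite (lead_word_out HLu Hu_out) !addr0.
by move/eqP; rewrite mulf_eq0 (negPf HLw.1) (negPf HLu.1).
Qed.

End PathVectors.

Lemma prodset_iter_tp (k : fieldType) (Q1 : Type) (y g : vec k Q1) n :
  prodset [:: y] [:: g] n (iter n (fun z => tp y g z) y).
Proof.
elim: n => [|n IH] /=; first by left.
by exists y, g, (iter n (fun z => tp y g z) y); do !split; try left.
Qed.

Lemma subgroup_vadd (k : fieldType) (Q1 : Type) (M J : vec k Q1 -> Prop) f g :
  subgroup M J -> J f -> J g -> J (vadd f g).
Proof.
move=> [_ [J0 JB]] Jf Jg.
have Jopp : J (vopp g).
  by have := JB _ _ J0 Jg; congr J; apply/veqP => l; rewrite /vadd add0r.
by have := JB _ _ Jf Jopp; congr J; apply/veqP => l; rewrite /vadd /vopp opprK.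
Qed.

Section TrivialGamma.
Variables (k : fieldType) (Q1 : Type) (M G : vec k Q1 -> Prop).
Local Notation Z := (@vzero k Q1).
Hypothesis M_subgroup : subgroup M M.
Hypothesis G_trivial : forall g, G g -> g = Z.

Lemma ideal_trivial_gamma : ideal M G M.
Proof.
split=> // a g m _ /G_trivial-> _.
by rewrite !tp_gamma0; split; exact: M_subgroup.2.1.
Qed.

Lemma prime_ideal_trivial_gamma P : ~ prime_ideal M G P.
Proof.
move=> [HP [[m [Hm Hnm]] Hprime]].
have P0 : P Z := HP.1.2.1.
have MGM : forall a g b, M a -> G g -> M b -> P (tp a g b).
  by move=> a g b _ /G_trivial-> _; rewrite tp_gamma0.
by case: (Hprime M M ideal_trivial_gamma ideal_trivial_gamma MGM) => /(_ m Hm).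
Qed.

Lemma radical_trivial_gamma r x : radical r M G x <-> M x.
Proof.
have M_closed := family_sum_closed (P := M) M_subgroup.2.1
  (fun f g => subgroup_vadd M_subgroup).
case: r => /=; split.
- by case.
- by move=> Mx; split=> // P /prime_ideal_trivial_gamma.
- by apply: M_closed => J y [[[HJ _] _] _] /HJ.
- move=> Mx; apply: family_sum_member Mx.
  split; first exact: ideal_trivial_gamma.
  by move=> y _ g /G_trivial->; exists 1%N; rewrite /= tp_gamma0.
- by apply: M_closed => J y [[[HJ _] _] _] /HJ.
- move=> Mx; apply: family_sum_member Mx.
  split; first exact: ideal_trivial_gamma.
  move=> F D _ HD; exists 1%N; split=> // z.
  by move=> [a [d [w [_ [/HD /G_trivial-> [_ ->]]]]]]; rewrite tp_gamma0.
- by apply: M_closed => J y [[[HJ _] _] _] /HJ.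
- move=> Mx; apply: family_sum_member Mx; split.
    split=> // a g m _ /G_trivial-> _; rewrite tp_gamma0; exact: M_subgroup.2.1.
  move=> y _ g /G_trivial->; exists (@vzero k Q1); split.
    by exists [::]; split=> // l; rewrite big_nil.
  by rewrite !vmul0l => l; rewrite /vadd /vzero !addr0.
Qed.
End TrivialGamma.

Section GradedGamma.
Variables (k : fieldType) (Q1 : Type) (M G : vec k Q1 -> Prop).
Local Notation Z := (@vzero k Q1).
Hypothesis M_bounded : forall m, M m -> bounded m.
Hypothesis G_bounded : forall g, G g -> bounded g.
Hypothesis M0 : M Z.
Hypothesis G_vscale : forall c g, G g -> G (vscale c g).
Variables m0 g0 : vec k Q1.
Hypotheses (M_m0 : M m0) (m0_neq0 : m0 <> Z) (G_g0 : G g0) (g0_neq0 : g0 <> Z).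

Lemma prime_ideal_zero : prime_ideal M G (eq^~ Z).
Proof.
have zero_subgroup : subgroup M (eq^~ Z).
  split=> [x ->//|]; split=> // x y -> ->.
  by apply/veqP => l; rewrite /vadd /vopp /vzero oppr0 addr0.
split; first by split=> // a g m -> _ _; rewrite /tp !vmul0l vmul0r.
split; first by exists m0.
move=> A B [[AM _] _] [[BM _] _] AGB.
have [|] := classic (forall a, A a -> a = Z); first by left.
move=> /not_all_ex_not[a] /(imply_to_and (A a))[Aa a_neq0].
right=> b Bb; apply: NNPP => b_neq0.
exact: tp_neq0 (M_bounded (AM _ Aa)) (G_bounded G_g0) (M_bounded (BM _ Bb))
  a_neq0 g0_neq0 b_neq0 (AGB _ _ _ Aa G_g0 Bb).
Qed.

Lemma nilpotent_elt_eq0 y : M y -> nilpotent_elt G y -> y = Z.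
Proof.
move=> My /(_ g0 G_g0)[n /veqP Hn]; apply: NNPP => y_neq0.
exact: iter_tp_neq0 (M_bounded My) (G_bounded G_g0) y_neq0 g0_neq0 Hn.
Qed.

Lemma loc_nilpotent_eq0 J y : (forall x, J x -> M x) -> loc_nilpotent G J ->
  J y -> y = Z.
Proof.
move=> JM Hloc Jy.
have JF : forall f, List.In f [:: y] -> J f by move=> f [<-|[]].
have GD : forall d, List.In d [:: g0] -> G d by move=> d [<-|[]].
have [n [_ Hn]] := Hloc _ _ JF GD; apply: NNPP => y_neq0.
apply: iter_tp_neq0 (M_bounded (JM _ Jy)) (G_bounded G_g0) y_neq0 g0_neq0 _.
exact/veqP/Hn/prodset_iter_tp.
Qed.

Lemma in_GM_bounded u : in_GM M G u -> bounded u.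
Proof.
move=> [ps [Hps /veqP ->]].
have -> : (fun l => \sum_(p <- ps) vmul p.1 p.2 l) =
          (fun l => \sum_(v <- [seq vmul p.1 p.2 | p <- ps]) v l).
  by apply/veqP => l; rewrite big_map.
apply: sum_closed => [|f g|v]; [exact: bounded0 | exact: bounded_vadd |].
move=> /List.in_map_iff[p [<- /Hps[Gp Mp]]].
exact: bounded_vmul (G_bounded Gp) (M_bounded Mp).
Qed.

(* If the constant coefficient d of g0 y is nonzero, the multiplier
   -d^-1 g0 gives (x y)[::] = -1, which no quasi-inverse tolerates. *)
Lemma rqr_eq0 y : M y -> rqr M G y -> y = Z.
Proof.
move=> My Hrqr; apply: NNPP => y_neq0.
have By := M_bounded My; have Bg0 := G_bounded G_g0.
have [d0|d_neq0] := eqVneq (vmul g0 y [::]) 0.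
  have [u [/in_GM_bounded Bu /veqP Hqr]] := Hrqr _ G_g0.
  have := quasi_inverse_eq0 (bounded_vmul Bg0 By) Bu d0 Hqr.
  have [Lg HLg] := lead_wordP Bg0 g0_neq0; have [Ly HLy] := lead_wordP By y_neq0.
  exact: lead_word_neq0 (lead_word_vmul HLg HLy).
set c := - (vmul g0 y [::])^-1.
have [u [_ /veqP Hqr]] := Hrqr _ (G_vscale c G_g0).
apply: quasi_inverse_const_coef Hqr _.
by rewrite !vmul_nil /vscale -mulrA -vmul_nil mulNr mulVf.
Qed.

Lemma radical_graded_gamma r x : radical r M G x <-> x = Z.
Proof.
have vadd_eq0 f g : f = Z -> g = Z -> vadd f g = Z.
  by move=> -> ->; apply/veqP => l; rewrite /vadd addr0.
have Z_closed := family_sum_closed (P := eq^~ Z) erefl vadd_eq0.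
case: r => /=; split; try by move=> ->; exact: family_sum0.
- by case=> _ /(_ _ prime_ideal_zero).
- by move=> ->; split=> // P [[[_ [P0 _]] _] _].
- apply: Z_closed => J y [[[JM _] _] Jnil] Jy.
  exact: nilpotent_elt_eq0 (JM _ Jy) (Jnil _ Jy).
- apply: Z_closed => J y [[[JM _] _] Jloc] Jy.
  exact: loc_nilpotent_eq0 JM Jloc Jy.
- apply: Z_closed => J y [[[JM _] _] Jrqr] Jy.
  exact: rqr_eq0 (JM _ Jy) (Jrqr _ Jy).
Qed.
End GradedGamma.

Section PathAlgebra.
Variables (k : fieldType) (I Q1 : Type) (src tgt : Q1 -> I).
Local Notation Z := (@vzero k Q1).
Local Notation inA := (@inA k I Q1 src tgt).

Lemma inA0 i j : inA i j Z.
Proof. by split=> [|l]; [exists [::] => l|]; rewrite eqxx. Qed.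

Lemma inA_vadd i j f g : inA i j f -> inA i j g -> inA i j (vadd f g).
Proof.
have supp l : f l + g l != 0 -> f l != 0 \/ g l != 0.
  by have [->|] := eqVneq (f l) 0; [rewrite add0r; right | left].
move=> [[Sf Hf] Wf] [[Sg Hg] Wg]; split.
  exists (Sf ++ Sg) => l /supp[/Hf|/Hg] Hl; apply: List.in_or_app; tauto.
by move=> l /supp[/Wf|/Wg].
Qed.

Lemma inA_vscale i j c f : inA i j f -> inA i j (vscale c f).
Proof.
have supp l : c * f l != 0 -> f l != 0 by rewrite mulf_eq0 negb_or => /andP[].
by move=> [[S Hf] Wf]; split; [exists S|] => l /supp; [exact: Hf | exact: Wf].
Qed.

Lemma inA_subgroup i j : subgroup (inA i j) (inA i j).
Proof.
split=> //; split=> [|f g Hf Hg]; first exact: inA0.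
have -> : vopp g = vscale (-1) g by apply/veqP => l; rewrite /vscale mulN1r.
by apply: inA_vadd Hf (inA_vscale _ Hg).
Qed.

Lemma inA_bounded i j f : inA i j f -> bounded f.
Proof. by case=> /finsupp_bounded. Qed.

Lemma not_Anz_eq0 i j g : ~ Anz k src tgt i j -> inA i j g -> g = Z.
Proof. by move=> HnA Hg; apply: NNPP => /veqP g_neq0; apply: HnA; exists g. Qed.

Lemma radical_Anz r s t x : Anz k src tgt s t -> Anz k src tgt t s ->
  radical r (inA s t) (inA t s) x <-> x = Z.
Proof.
move=> [m [Mm /veqP m_neq0]] [g [Gg /veqP g_neq0]].
apply: (radical_graded_gamma _ _ (inA0 s t) _ Mm m_neq0 Gg g_neq0).
- exact: inA_bounded.
- exact: inA_bounded.
- exact: inA_vscale.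
Qed.

Lemma radical_not_Anz r s t x : ~ Anz k src tgt t s ->
  radical r (inA s t) (inA t s) x <-> inA s t x.
Proof.
move=> HnA; apply: radical_trivial_gamma; first exact: inA_subgroup.
by move=> g; apply: not_Anz_eq0.
Qed.
End PathAlgebra.

Theorem lemma3p1 (k : fieldType) (I Q1 : Type) (src tgt : Q1 -> I)
  (r : radkind) (s t : I) :
  Anz k src tgt s t ->
  ((forall x, radical r (inA src tgt s t) (inA src tgt t s) x <->
              veq x (@vzero k Q1)) <-> Anz k src tgt t s) /\
  ((forall x, radical r (inA src tgt s t) (inA src tgt t s) x <->
              @inA k I Q1 src tgt s t x) <-> ~ Anz k src tgt t s).
Proof.
move=> Ast; have [m [Mm /veqP m_neq0]] := Ast; split; split.
- move=> Hrad; apply: NNPP => HnA; apply: m_neq0.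
  by apply/veqP/Hrad/(radical_not_Anz _ _ HnA).
- by move=> Ats x; rewrite veqP; exact: radical_Anz.
- move=> Hrad Ats; apply: m_neq0.
  by apply/(radical_Anz r _ Ast Ats)/Hrad.
- by move=> HnA x; exact: radical_not_Anz.
Qed.
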